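(* Let $G$ be a finite simple graph and let $L=x_1x_2\dots x_n$ be an enumeration of its vertices such that $G$ has no two secant edges with respect to $L$. Then $G$ is $3$-colorable, i.e. $\chi(G)\le 3$.
   Context: For an enumeration $L=x_1x_2\dots x_n$ of the vertices of $G$, an edge $x_ix_j$ is a jump with respect to $L$ if $|i-j|>1$. Two jumps $x_lx_m$ and $x_px_q$ with $l<m$ and $p<q$ are secant with respect to $L$ if $l<p<m<q$ or $p<l<q<m$. *)

From mathcomp Require Import all_boot.
Set Implicit Arguments. Unset Strict Implicit. Unset Printing Implicit Defensive.

Definition simple_graph (T : finType) (e : rel T) : Prop :=
  symmetric e /\ irreflexive e.

(* An enumeration L = x_1 ... x_n of the vertices: a duplicate-free
   sequence containing every vertex.  The position of x is index x L. *)
Definition enumeration (T : finType) (L : seq T) : Prop :=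
  uniq L /\ forall x : T, x \in L.

(* Edge x_i x_j with i < j, presented as the ordered pair (x, y) with
   index x < index y, is a jump w.r.t. L if j - i > 1. *)
Definition ordered_jump (T : finType) (e : rel T) (L : seq T) (x y : T) : bool :=
  e x y && (index x L + 1 < index y L).

Definition secant (T : finType) (e : rel T) (L : seq T) (a b c d : T) : bool :=
  [&& ordered_jump e L a b, ordered_jump e L c d &
   let l := index a L in let m := index b L in
   let p := index c L in let q := index d L in
   ((l < p) && (p < m) && (m < q)) || ((p < l) && (l < q) && (q < m))].

Definition proper_coloring (T : finType) (e : rel T) (k : nat) (c : T -> 'I_k) : Prop :=
  forall x y : T, e x y -> c x != c y.

Definition colorable (T : finType) (e : rel T) (k : nat) : Prop :=
  exists c : T -> 'I_k, proper_coloring e c.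

(* A graph whose vertices are placed on a line without crossing edges is
   2-degenerate: every nonempty vertex set S contains a vertex with at most two
   neighbours in S.  Take an edge lm of S that spans some vertex of S and whose
   span is minimal, and let u be the first vertex of S after l.  Any neighbour
   w <> l of u must lie in (u, m] (otherwise uw crosses lm or comes before u),
   and nothing of S lies strictly between u and w (otherwise uw would be a
   shorter spanning edge); so w is the successor of u in S.  If no edge spans
   a vertex of S, the first vertex of S already works.  Greedy colouring along
   a degeneracy order then uses three colours. *)
From mathcomp Require Import all_boot.
From mathcomp Require Import zify.

Set Implicit Arguments.
Unset Strict Implicit.
Unset Printing Implicit Defensive.

Lemma exists_notin_small_set (T : finType) (A : {set T}) :
  #|A| < #|T| -> exists x, x \notin A.
Proof.
move=> A_small; have : ~~ ([set: T] \subset A).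
  by apply: contraL A_small => /subset_leq_card; rewrite cardsT -leqNgt.
by case/subsetPn=> x _ x_notin; exists x.
Qed.

Section DegenerateColoring.

Variables (T : finType) (e : rel T) (k : nat).
Hypotheses (e_sym : symmetric e) (e_irr : irreflexive e).
Hypothesis degenerate : forall S : {set T}, S != set0 ->
  exists2 u, u \in S & #|[set w in S | e u w]| <= k.

Lemma degenerate_colorable_on (S : {set T}) :
  exists c : T -> 'I_k.+1, {in S &, forall x y, e x y -> c x != c y}.
Proof.
have [n] := ubnP #|S|; elim: n S => // n IH S; rewrite ltnS => S_le.
have [->|S_nonempty] := eqVneq S set0; first by exists (fun=> ord0) => x; rewrite inE.
have [u u_S deg_u] := degenerate S_nonempty.
have S'_lt : #|S :\ u| < n by move: S_le; rewrite (cardsD1 u S) u_S.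
have [c c_proper] := IH _ S'_lt.
set N := [set w in S | e u w] in deg_u.
have [col col_new] : exists col, col \notin c @: N.
  by apply: exists_notin_small_set; rewrite card_ord ltnS (leq_trans (leq_imset_card _ _)).
have col_avoids w : w \in S -> e u w -> col != c w.
  by move=> w_S e_uw; apply: contraNneq col_new => ->; apply: imset_f; rewrite inE w_S.
exists (fun x => if x == u then col else c x) => x y x_S y_S e_xy.
case: (eqVneq x u) => [x_u|x_u]; case: (eqVneq y u) => [y_u|y_u].
- by rewrite x_u y_u e_irr in e_xy.
- by rewrite x_u in e_xy; apply: col_avoids.
- by rewrite eq_sym; apply: col_avoids; rewrite // -y_u e_sym.
- by apply: c_proper; rewrite // in_setD1 ?x_u ?y_u.
Qed.

Lemma degenerate_colorable : colorable e k.+1.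
Proof.
have [c c_proper] := degenerate_colorable_on [set: T].
by exists c => x y; apply: c_proper; rewrite inE.
Qed.

End DegenerateColoring.

Section NonCrossing.

Variables (T : finType) (e : rel T) (pos : T -> nat).
Hypotheses (e_sym : symmetric e) (e_irr : irreflexive e) (pos_inj : injective pos).
Hypothesis noncrossing : forall a b c d, e a b -> e c d ->
  ~~ [&& pos a < pos c, pos c < pos b & pos b < pos d].

Definition between (S : {set T}) x y := [exists v in S, pos x < pos v < pos y].

Definition successor_in (S : {set T}) x y := (pos x < pos y) && ~~ between S x y.

Lemma successor_in_uniq (S : {set T}) u w1 w2 : w1 \in S -> w2 \in S ->
  successor_in S u w1 -> successor_in S u w2 -> w1 = w2.
Proof.
move=> w1_S w2_S /andP[u_w1 /existsPn not_between1] /andP[u_w2 /existsPn not_between2].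
apply: pos_inj; case: (ltngtP (pos w1) (pos w2)) => // w12.
  by have := not_between2 w1; rewrite w1_S u_w1 w12.
by have := not_between1 w2; rewrite w2_S u_w2 w12.
Qed.

Lemma card_neighbours_le2 (S : {set T}) u a :
  (forall w, w \in S -> e u w -> w != a -> successor_in S u w) ->
  #|[set w in S | e u w]| <= 2.
Proof.
move=> u_succ; rewrite (cardsD1 a) -add1n leq_add ?leq_b1 //.
apply/card_le1_eqP => w1 w2; rewrite !inE => /and3P[w1_a w1_S e_uw1] /and3P[w2_a w2_S e_uw2].
by apply: (successor_in_uniq w2_S w1_S); apply: u_succ.
Qed.

Lemma innermost_edge_successor (S : {set T}) l m :
  l \in S -> m \in S -> e l m -> between S l m ->
  (forall x y, x \in S -> y \in S -> e x y -> between S x y ->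
     pos m - pos l <= pos y - pos x) ->
  exists2 u, u \in S & forall w, w \in S -> e u w -> w != l -> successor_in S u w.
Proof.
move=> l_S m_S e_lm /existsP[v0 /andP[v0_S l_v0_m]] min_span.
have v0_inside : [pred v | [&& v \in S, pos l < pos v & pos v < pos m]] v0.
  by rewrite /= v0_S.
have [u /and3P[u_S l_u u_m] u_first] := arg_minnP pos v0_inside.
exists u => // w w_S e_uw w_l.
have e_wu : e w u by rewrite e_sym.
have l_w : pos l < pos w.
  case: (ltngtP (pos l) (pos w)) => // [w_l'|/pos_inj l_eq]; last by rewrite l_eq eqxx in w_l.
  by have := noncrossing e_wu e_lm; rewrite w_l' l_u u_m.
have u_w : pos u < pos w.
  case: (ltngtP (pos u) (pos w)) => // [w_u|/pos_inj u_eq]; last by rewrite u_eq e_irr in e_uw.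
  by have := u_first w; rewrite /= w_S l_w (ltn_trans w_u u_m) leqNgt w_u => /(_ isT).
have w_m : pos w <= pos m.
  by rewrite leqNgt; apply/negP => m_w; have := noncrossing e_lm e_uw; rewrite l_u u_m m_w.
rewrite /successor_in u_w /=; apply/negP => uw_between.
by have := min_span u w u_S w_S e_uw uw_between; lia.
Qed.

Lemma first_vertex_successor (S : {set T}) u : u \in S ->
  (forall v, v \in S -> pos u <= pos v) ->
  (forall x y, x \in S -> y \in S -> e x y -> ~~ between S x y) ->
  forall w, w \in S -> e u w -> successor_in S u w.
Proof.
move=> u_S u_first no_spanning w w_S e_uw.
have w_u : pos w != pos u by apply: contraTneq e_uw => /pos_inj ->; rewrite e_irr.
by rewrite /successor_in ltn_neqAle eq_sym w_u u_first // no_spanning.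
Qed.

Lemma noncrossing_low_degree (S : {set T}) : S != set0 ->
  exists2 u, u \in S & #|[set w in S | e u w]| <= 2.
Proof.
move=> S_nonempty.
pose spanning (p : T * T) := [&& p.1 \in S, p.2 \in S, e p.1 p.2 & between S p.1 p.2].
case: (pickP spanning) => [p0 p0_spanning | no_spanning].
  have [[l m] /and4P[l_S m_S e_lm lm_between] min_span] :=
    arg_minnP (fun p : T * T => pos p.2 - pos p.1) p0_spanning.
  have [u u_S u_succ] : exists2 u, u \in S &
      forall w, w \in S -> e u w -> w != l -> successor_in S u w.
    apply: innermost_edge_successor l_S m_S e_lm lm_between _ => x y x_S y_S e_xy xy_between.
    by apply: (min_span (x, y)); rewrite /spanning /= x_S y_S e_xy.
  by exists u => //; apply: card_neighbours_le2 u_succ.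
have [u0 u0_S] := set0Pn _ S_nonempty.
have [u u_S u_first] := arg_minnP pos u0_S.
exists u => //; apply: (@card_neighbours_le2 _ _ u) => w w_S e_uw _.
apply: first_vertex_successor => // x y x_S y_S e_xy.
by have := no_spanning (x, y); rewrite /spanning /= x_S y_S e_xy => /negbT.
Qed.

End NonCrossing.

Theorem lemma2 (T : finType) (e : rel T) (L : seq T) :
  simple_graph e -> enumeration L ->
  (forall a b c d : T, ~~ secant e L a b c d) ->
  colorable e 3.
Proof.
move=> [e_sym e_irr] [_ L_all] no_secant.
have pos_inj : injective (index ^~ L) by move=> x y; apply: index_inj (L_all x) (L_all y).
apply: (degenerate_colorable e_sym e_irr) => S S_nonempty.
apply: (noncrossing_low_degree e_sym e_irr pos_inj) S_nonempty => a b c d e_ab e_cd.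
apply/and3P => -[a_c c_b b_d]; move/negP: (no_secant a b c d); apply.
by rewrite /secant /ordered_jump e_ab e_cd; lia.
Qed.
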